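(* Let $p\geq 5$ be an integer and let $(m_n)$ be the metallic numbers defined by $m_{-1}=0$, $m_0=1$, $m_{n+2}=(p-2)m_{n+1}-m_n$. Then every positive integer $n$ can be written as $$n=\sum_{i=0}^{k} a_i\,m_i$$ for some $k\geq 0$ and digits $a_i\in\{1,2,\dots,p-2\}$ for all $i\in\{0,\dots,k\}$.
   Context: $p\ge 5$ is a fixed integer. The metallic numbers are $m_{-1}=0$, $m_0=1$, $m_{n+2}=(p-2)m_{n+1}-m_n$ for $n\ge -1$ (so $m_1=p-2$). *)

From mathcomp Require Import all_boot all_order all_algebra.
Set Implicit Arguments. Unset Strict Implicit. Unset Printing Implicit Defensive.
Import Order.TTheory GRing.Theory Num.Theory.
Local Open Scope ring_scope.

(* Metallic numbers as integers: metallic p n = m_n for n >= 0, where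
   m_{-1} = 0, m_0 = 1, m_{n+2} = (p-2) m_{n+1} - m_n.
   Hence m_1 = p - 2 and m_{n+2} = (p-2) m_{n+1} - m_n for n >= 0. *)
Fixpoint metallic (p : nat) (n : nat) : int :=
  match n with
  | 0 => 1
  | 1 => (p%:Z - 2)
  | (n'.+1 as k).+1 => (p%:Z - 2) * metallic p k - metallic p n'
  end.

From mathcomp Require Import all_boot all_order all_algebra zify.
Import Order.TTheory GRing.Theory Num.Theory.
Set Implicit Arguments. Unset Strict Implicit.

(* Write [S_k = m_0 + ... + m_k].  For p >= 4 the metallic numbers are positive,
   m_0 = 1, and m_{k+1} <= (p-3) S_k + 1.  For any weights with these properties a
   greedy argument represents every x <= d S_k with digits in [0, d] on the
   weights m_0..m_k (here d = p - 3); shifting all digits by one represents every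
   n in [S_k, (d+1) S_k] with digits in [1, d+1], and these windows cover all
   positive integers because S_{k+1} <= (d+1) S_k + 1. *)

Definition psum (w : nat -> nat) (k : nat) : nat := \sum_(0 <= i < k.+1) w i.

Lemma psumS w k : psum w k.+1 = psum w k + w k.+1.
Proof. by rewrite /psum big_nat_recr. Qed.

Lemma leq_psum w k : w k <= psum w k.
Proof. by rewrite /psum big_nat_recr //= leq_addl. Qed.

Lemma greedy_digit (M s d x : nat) : 0 < M -> M <= d * s + 1 -> x <= d * (s + M) ->
  exists c, [/\ c <= d, c * M <= x & x - c * M <= d * s].
Proof.
move=> M_gt0 M_le x_le; have x_eq := divn_eq x M; have mod_lt := ltn_pmod x M_gt0.
have [d_le | q_lt] := leqP d (x %/ M).
- exists d; split => //; last by lia.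
  by rewrite (leq_trans (leq_mul d_le (leqnn M))) // {2}x_eq leq_addr.
- exists (x %/ M); split; lia.
Qed.

Section DigitRepresentation.

Variables (w : nat -> nat) (d : nat).
Hypotheses (w0 : w 0 = 1) (w_gt0 : forall i, 0 < w i)
  (wS_le : forall k, w k.+1 <= d * psum w k + 1).

Lemma psum0 : psum w 0 = 1.
Proof. by rewrite /psum big_nat1. Qed.

Lemma ltn_psum k : k < psum w k.
Proof. by elim: k => [|k IH]; rewrite ?psum0 // psumS -addn1 leq_add. Qed.

Lemma digits_le_representation k x : x <= d * psum w k ->
  exists b, (forall i, i <= k -> b i <= d) /\
    x = \sum_(0 <= i < k.+1) b i * w i.
Proof.
elim: k x => [|k IH] x x_le.
  exists (fun=> x); rewrite psum0 muln1 in x_le.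
  by split=> [//|]; rewrite big_nat1 w0 muln1.
rewrite psumS in x_le.
have [c [c_le cw_le rest_le]] := greedy_digit (w_gt0 k.+1) (wS_le k) x_le.
have [b [b_le rest_eq]] := IH _ rest_le.
exists (fun i => if i <= k then b i else c); split.
  by move=> i _; case: ifP => // /b_le.
rewrite big_nat_recr //= ltnn -(subnK cw_le) rest_eq.
congr (_ + _); apply: eq_big_nat => i /andP[_ i_lt]; by rewrite -ltnS i_lt.
Qed.

Lemma window_representation k n : psum w k <= n <= d.+1 * psum w k ->
  exists a, (forall i, i <= k -> 0 < a i <= d.+1) /\
    n = \sum_(0 <= i < k.+1) a i * w i.
Proof.
move=> /andP[S_le n_le].
have [b [b_le n_eq]] : exists b, (forall i, i <= k -> b i <= d) /\
    n - psum w k = \sum_(0 <= i < k.+1) b i * w i.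
  by apply: digits_le_representation; rewrite leq_subLR -mulSn.
exists (fun i => (b i).+1); split; first by move=> i /b_le.
rewrite -(subnK S_le) n_eq /psum -big_split /=.
by apply: eq_bigr => i _; rewrite mulSn addnC.
Qed.

Lemma window_cover k n : 0 < n <= d.+1 * psum w k ->
  exists j, psum w j <= n <= d.+1 * psum w j.
Proof.
elim: k => [|k IH] /andP[n_gt0 n_le].
  by exists 0; rewrite psum0 in n_le *; apply/andP.
have [n_le' | n_gt] := leqP n (d.+1 * psum w k); first by apply: IH; apply/andP.
exists k.+1; rewrite n_le andbT psumS.
by have := wS_le k; rewrite mulSn in n_gt; lia.
Qed.

Lemma pos_digit_representation n : 0 < n ->
  exists k a, (forall i, i <= k -> 0 < a i <= d.+1) /\
    n = \sum_(0 <= i < k.+1) a i * w i.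
Proof.
move=> n_gt0.
have [k /window_representation [a rep]] : exists j, psum w j <= n <= d.+1 * psum w j.
  apply: (@window_cover n); rewrite n_gt0 /=.
  by rewrite mulSn (leq_trans (ltnW (ltn_psum n))) ?leq_addr.
by exists k, a.
Qed.

End DigitRepresentation.

Fixpoint metallicn (p n : nat) : nat :=
  match n with
  | 0 => 1
  | 1 => p - 2
  | (n'.+1 as k).+1 => (p - 2) * metallicn p k - metallicn p n'
  end.

Lemma metallicnSS p i :
  metallicn p i.+2 = (p - 2) * metallicn p i.+1 - metallicn p i.
Proof. by []. Qed.

Lemma metallicnS_le p i : metallicn p i.+1 <= (p - 2) * metallicn p i.
Proof. by case: i => [|i]; rewrite /= ?muln1 ?leq_subr. Qed.

Lemma metallicn_gt0_le p (hp : 4 <= p) i : 0 < metallicn p i <= metallicn p i.+1.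
Proof.
elim: i => [|i /andP[m_gt0 m_le]]; first by rewrite /=; lia.
rewrite metallicnSS; nia.
Qed.

Lemma metallicnS_le_psum p (hp : 4 <= p) k :
  metallicn p k.+1 <= (p - 3) * psum (metallicn p) k + 1.
Proof.
case: k => [|k]; first by rewrite psum0 /=; lia.
have S_ge : metallicn p k + metallicn p k.+1 <= psum (metallicn p) k.+1.
  by rewrite psumS leq_add2r leq_psum.
have := metallicnS_le p k; have := metallicn_gt0_le hp k.
rewrite metallicnSS; nia.
Qed.

Local Open Scope ring_scope.

Lemma metallic_nat p (hp : (4 <= p)%N) i : metallic p i = (metallicn p i)%:Z.
Proof.
suff : metallic p i = (metallicn p i)%:Z /\ metallic p i.+1 = (metallicn p i.+1)%:Z
  by case.
elim: i => [|i [e1 e2]]; first by split=> //=; rewrite subzn //; lia.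
split=> //; have /andP[_ m_le] := metallicn_gt0_le hp i.
change (metallic p i.+2) with ((p%:Z - 2) * metallic p i.+1 - metallic p i).
rewrite e1 e2 metallicnSS; nia.
Qed.

Theorem theorem4 (p : nat) (hp : (5 <= p)%N) (n : nat) (hn : (0 < n)%N) :
  exists (k : nat) (a : nat -> nat),
    (forall i, (i <= k)%N -> (1 <= a i <= p - 2)%N) /\
    n%:Z = \sum_(0 <= i < k.+1) (a i)%:Z * metallic p i.
Proof.
have hp4 : (4 <= p)%N by apply: ltnW.
have m_gt0 i : (0 < metallicn p i)%N by case/andP: (metallicn_gt0_le hp4 i).
have [k [a [a_range n_eq]]] :=
  pos_digit_representation (erefl : metallicn p 0 = 1%N) m_gt0
    (metallicnS_le_psum hp4) hn.
exists k, a; split; first by move=> i /a_range; have -> : (p - 3).+1 = (p - 2)%N by lia.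
rewrite n_eq (big_morph Posz PoszD (erefl _)).
by apply: eq_bigr => i _; rewrite metallic_nat // PoszM.
Qed.
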